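(* Let $m,n,w,d$ be positive integers with $1\le w\le m-1$. For all positive integers $l$ dividing $n$, all integers $0\le v\le l$, and all integers $\delta$ with $0\le \delta\le \frac{n}{l}\min\{v,l-v\}$, $$A(m,n,w,d)\le \frac{1}{\alpha\left(l,\frac{n}{l},v,\delta\right)}\left(\frac{m^l}{w^v(m-w)^{l-v}}\right)^{\frac{n}{l}} A\left((m-1)l,\frac{n}{l},lw-v,d-\delta\right).$$
   Context: $J(m,w)$ denotes the set of binary vectors of length $m$ and Hamming weight $w$. Elements of $J(m,w)^n$ are identified with $m\times n$ binary matrices all of whose columns have weight $w$, with distance the binary Hamming distance. $A(m,n,w,d)$ denotes the maximum cardinality of a nonempty subset of $J(m,w)^n$ in which any two distinct elements are at Hamming distance at least $2d$ (for $d\le 0$ this is just $\binom{m}{w}^n$). $\alpha(m,n,w,\delta)$ denotes the maximum cardinality of a subset of $J(m,w)^n$ in which any two elements are at Hamming distance at most $2\delta$ (so $\alpha(m,n,w,0)=1$ and $\alpha(m,n,w,nw)=\binom{m}{w}^n$). *)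

From HB Require Import structures.
From mathcomp Require Import all_boot all_order all_algebra.
Set Implicit Arguments. Unset Strict Implicit. Unset Printing Implicit Defensive.
Import Order.TTheory GRing.Theory Num.Theory.

(* Elements of J(m,w)^n: m x n binary matrices all of whose columns have weight w. *)
Definition colw_ok (m n w : nat) (X : 'M[bool]_(m, n)) : bool :=
  [forall j : 'I_n, #|[set i : 'I_m | X i j]| == w].

Definition hdist (m n : nat) (X Y : 'M[bool]_(m, n)) : nat :=
  #|[set ij : 'I_m * 'I_n | X ij.1 ij.2 != Y ij.1 ij.2]|.

Definition is_code (m n w : nat) (d : int) (C : {set 'M[bool]_(m, n)}) : bool :=
  [&& C != set0,
      [forall X in C, colw_ok w X] &
      [forall X in C, forall Y in C, (X != Y) ==> ((2 * d)%R <= (hdist X Y)%:Z)%R]].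

Definition Acode (m n w : nat) (d : int) : nat :=
  \max_(C : {set 'M[bool]_(m, n)} | is_code w d C) #|C|.

Definition is_anticode (m n w delta : nat) (C : {set 'M[bool]_(m, n)}) : bool :=
  [forall X in C, colw_ok w X] &&
  [forall X in C, forall Y in C, hdist X Y <= 2 * delta].

Definition alpha (m n w delta : nat) : nat :=
  \max_(C : {set 'M[bool]_(m, n)} | is_anticode w delta C) #|C|.

From mathcomp Require Import all_boot all_order all_algebra.
Import Order.TTheory GRing.Theory Num.Theory.
From mathcomp Require Import zify.
Set Implicit Arguments. Unset Strict Implicit. Unset Printing Implicit Defensive.

(* A selection r picks one entry r j in every column j of an m x n matrix; cut the
   columns into q = n/l blocks of l.  Given a code C and an anticode S, count the pairs
   (r, c), c in C, whose selected entries, read as an l x q matrix, lie in S.  For a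
   fixed c there are exactly |S| (w^v (m-w)^(l-v))^q of them, because a column of an
   element of S prescribes the selected bit of each of the l corresponding columns of c.
   For a fixed r, deleting the selected entries and stacking the remaining (m-1) x l
   entries of each block into one column is injective on those codewords, gives column
   weight lw - v, and lowers distances by the distance of the selected patterns, at most
   2 delta; so there are at most A((m-1)l, q, lw-v, d-delta) of them.  Comparing the two
   counts gives |C| |S| (w^v (m-w)^(l-v))^q <= m^n A((m-1)l, q, lw-v, d-delta). *)

Lemma big_mxvec_index R idx (op : Monoid.com_law idx) a b (F : 'I_(a * b) -> R) :
  \big[op/idx]_k F k = \big[op/idx]_(i < a) \big[op/idx]_(j < b) F (mxvec_index i j).
Proof. by rewrite pair_big (reindex _ (curry_mxvec_bij a b)); apply: eq_bigr => -[]. Qed.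

Lemma card_set_sum (T : finType) (P : pred T) : #|[set x | P x]| = \sum_x P x.
Proof. by rewrite -sum1dep_card big_mkcond; apply: eq_bigr => x _; case: (P x). Qed.

Lemma card_ord_lt l v : v <= l -> #|[set t : 'I_l | t < v]| = v.
Proof.
move=> vl; have widen_inj : injective (widen_ord vl) by move=> a b /(congr1 val) /= /val_inj.
rewrite -[RHS]card_ord -(card_imset _ widen_inj).
apply: eq_card => t; rewrite inE; apply/idP/imsetP => [tv | [u _ ->]]; last exact: (ltn_ord u).
by exists (Ordinal tv) => //; apply: val_inj.
Qed.

Lemma hdistE m n (X Y : 'M[bool]_(m, n)) :
  hdist X Y = \sum_j \sum_i (X i j != Y i j : nat).
Proof. by rewrite /hdist card_set_sum exchange_big pair_bigA. Qed.

Lemma colw_okE m n w (X : 'M[bool]_(m, n)) :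
  colw_ok w X = [forall j, \sum_i (X i j : nat) == w].
Proof. by apply: eq_forallb => j; rewrite card_set_sum. Qed.

Lemma prod_if_card (T : finType) (P : pred T) a b :
  \prod_t (if P t then a else b) = a ^ #|[set t | P t]| * b ^ (#|T| - #|[set t | P t]|).
Proof.
have -> : #|T| - #|[set t | P t]| = #|[set t | ~~ P t]|.
  by rewrite -(cardsC [set t | P t]) addKn; apply: eq_card => t; rewrite !inE.
rewrite (bigID P) /= -!prod_nat_const.
by congr (_ * _); apply: eq_big => [t | t Pt]; rewrite ?inE ?Pt ?(negbTE Pt).
Qed.

Lemma card_row_selections M N w (X : 'M[bool]_(M, N)) (y : 'I_N -> bool) :
  colw_ok w X ->
  #|[set r : {ffun 'I_N -> 'I_M} | [forall j, X (r j) j == y j]]| =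
    \prod_j (if y j then w else M - w).
Proof.
move=> /forallP Xw.
have -> : #|[set r : {ffun 'I_N -> 'I_M} | [forall j, X (r j) j == y j]]| =
          #|family (fun j => [pred i | X i j == y j])|.
  by apply: eq_card => r; rewrite inE; apply/forallP/familyP => H j; have := H j.
rewrite card_family foldrE big_image /=; apply: eq_bigr => j _.
have Xj : #|[pred i | X i j]| = w by rewrite -(eqP (Xw j)); apply: eq_card => i; rewrite inE.
case: (y j).
  by rewrite -Xj; apply: eq_card => i; rewrite -topredE /= eqb_id.
rewrite -[in RHS](card_ord M) -(cardC [pred i | X i j]) Xj addKn.
by apply: eq_card => i; rewrite -topredE /= eqbF_neg.
Qed.

Lemma hdistxx m n (X : 'M[bool]_(m, n)) : hdist X X = 0.
Proof. by rewrite hdistE big1 // => j _; rewrite big1 // => i _; rewrite eqxx. Qed.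

Lemma card_le_Acode m n w d (C : {set 'M[bool]_(m, n)}) :
  is_code w d C -> #|C| <= Acode m n w d.
Proof. exact: leq_bigmax_cond. Qed.

Section BlockSplit.
Variables (m1 l q : nat).
Local Notation M := m1.+1.
Local Notation N := (q * l)%N.
Local Notation selection := {ffun 'I_N -> 'I_M}.
Implicit Types (X Y : 'M[bool]_(M, N)) (r : selection) (C : {set 'M[bool]_(M, N)}).
Implicit Types (x : 'M[bool]_(l, q)) (S : {set 'M[bool]_(l, q)}).

(* Column [mxvec_index b t] is column [t] of the [b]-th block of [l] consecutive columns. *)
Definition sel_mx r X : 'M[bool]_(l, q) :=
  \matrix_(t, b) X (r (mxvec_index b t)) (mxvec_index b t).

Definition rest_mx r X : 'M[bool]_(m1 * l, q) :=
  \matrix_(p, b)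
    mxvec (\matrix_(k, t) X (lift (r (mxvec_index b t)) k) (mxvec_index b t)) ord0 p.

Lemma rest_mxE r X k t b :
  rest_mx r X (mxvec_index k t) b =
    X (lift (r (mxvec_index b t)) k) (mxvec_index b t).
Proof. by rewrite !mxE mxvecE mxE. Qed.

Lemma hdist_sel_rest r X Y :
  hdist X Y = hdist (rest_mx r X) (rest_mx r Y) + hdist (sel_mx r X) (sel_mx r Y).
Proof.
rewrite !hdistE big_mxvec_index /= -big_split; apply: eq_bigr => b _ /=.
rewrite big_mxvec_index /= [X in _ = X + _]exchange_big -big_split /=.
apply: eq_bigr => t _.
rewrite (bigD1_ord (r (mxvec_index b t))) //= addnC; congr (_ + _).
  by apply: eq_bigr => k _; rewrite !rest_mxE.
by rewrite !mxE.
Qed.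

Lemma colw_rest_mx w v r X :
  colw_ok w X -> colw_ok v (sel_mx r X) -> colw_ok (l * w - v) (rest_mx r X).
Proof.
rewrite !colw_okE => /forallP Xw /forallP selv; apply/forallP => b.
have col_split t : \sum_k (rest_mx r X (mxvec_index k t) b : nat) + sel_mx r X t b = w.
  rewrite -(eqP (Xw (mxvec_index b t))) (bigD1_ord (r (mxvec_index b t))) //= addnC mxE.
  by congr (_ + _); apply: eq_bigr => k _; rewrite rest_mxE.
have sum_split : \sum_t (\sum_k (rest_mx r X (mxvec_index k t) b : nat) + sel_mx r X t b) = l * w.
  by rewrite (eq_bigr _ (fun t _ => col_split t)) sum_nat_const card_ord.
rewrite big_split /= (eqP (selv b)) in sum_split.
by rewrite -sum_split addnK big_mxvec_index /= exchange_big.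
Qed.

Lemma rest_mx_inj w r X Y :
  colw_ok w X -> colw_ok w Y -> rest_mx r X = rest_mx r Y -> X = Y.
Proof.
rewrite !colw_okE => /forallP Xw /forallP Yw XY.
have off_r j (k : 'I_m1) : X (lift (r j) k) j = Y (lift (r j) k) j.
  case/mxvec_indexP: j => b t.
  by have := congr1 (fun Z : 'M_(m1 * l, q) => Z (mxvec_index k t) b) XY; rewrite !rest_mxE.
apply/matrixP => i j; case: (unliftP (r j) i) => [k -> | ->]; first exact: off_r.
have := eqP (Xw j); rewrite -(eqP (Yw j)) !(bigD1_ord (r j)) //=.
rewrite (eq_bigr _ (fun k _ => congr1 nat_of_bool (off_r j k))) => /addIn.
by case: (X _ _); case: (Y _ _).
Qed.

Lemma sel_mx_eq r X x : (sel_mx r X == x) = [forall j, X (r j) j == mxvec x^T ord0 j].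
Proof.
apply/eqP/forallP => [<- j | sel_x]; first by case/mxvec_indexP: j => b t; rewrite mxvecE !mxE.
apply/matrixP => t b; apply/eqP.
by have := sel_x (mxvec_index b t); rewrite mxvecE !mxE.
Qed.

Lemma card_sel_mx_eq w v X x : colw_ok w X -> colw_ok v x ->
  #|[set r : selection | sel_mx r X == x]| = (w ^ v * (M - w) ^ (l - v)) ^ q.
Proof.
move=> Xw /forallP xv.
have -> : [set r : selection | sel_mx r X == x] =
          [set r : selection | [forall j, X (r j) j == mxvec x^T ord0 j]].
  by apply/setP => r; rewrite !inE sel_mx_eq.
rewrite (card_row_selections _ Xw) big_mxvec_index /= -[in RHS](card_ord q) -prod_nat_const.
apply: eq_bigr => b _; under eq_bigr do rewrite mxvecE mxE.
by rewrite prod_if_card card_ord (eqP (xv b)).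
Qed.

Lemma card_sel_mx_in w v X S :
  colw_ok w X -> {in S, forall x, colw_ok v x} ->
  #|[set r : selection | sel_mx r X \in S]| = #|S| * (w ^ v * (M - w) ^ (l - v)) ^ q.
Proof.
move=> Xw Sv; rewrite -sum1dep_card (partition_big (sel_mx^~ X) (mem S)) //= -sum_nat_const.
apply: eq_bigr => x xS; rewrite -(card_sel_mx_eq Xw (Sv x xS)) -sum1dep_card.
by apply: eq_bigl => r; rewrite andb_idl // => /eqP ->.
Qed.

Lemma card_sel_mx_in_code w v d delta r C S :
  is_code w d C -> is_anticode v delta S ->
  #|[set c in C | sel_mx r c \in S]| <= Acode (m1 * l) q (l * w - v) (d - delta%:Z).
Proof.
case/and3P=> _ /forall_inP Cw /forall_inP Cd /andP[/forall_inP Sv /forall_inP Sd].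
set D := [set c in C | sel_mx r c \in S].
have [-> | /set0Pn[c0 c0D]] := eqVneq D set0; first by rewrite cards0.
have rest_inj : {in D &, injective (rest_mx r)}.
  by move=> X Y /setIdP[XC _] /setIdP[YC _]; apply: rest_mx_inj (Cw X XC) (Cw Y YC).
rewrite -(card_in_imset rest_inj); apply: card_le_Acode; apply/and3P; split.
- by apply/set0Pn; exists (rest_mx r c0); apply: imset_f.
- apply/forall_inP => _ /imsetP[X /setIdP[XC XS] ->].
  exact: colw_rest_mx (Cw X XC) (Sv _ XS).
- apply/forall_inP => _ /imsetP[X /setIdP[XC XS] ->].
  apply/forall_inP => _ /imsetP[Y /setIdP[YC YS] ->]; apply/implyP => rest_neq.
  have XY : X != Y by apply: contraNneq rest_neq => ->.
  have := implyP (forall_inP (Cd X XC) Y YC) XY; have := forall_inP (Sd _ XS) _ YS.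
  rewrite (hdist_sel_rest r X Y); lia.
Qed.

Lemma code_anticode_card_bound w v d delta C S :
  is_code w d C -> is_anticode v delta S ->
  #|C| * #|S| * (w ^ v * (M - w) ^ (l - v)) ^ q <=
    M ^ N * Acode (m1 * l) q (l * w - v) (d - delta%:Z).
Proof.
move=> Ccode Santi.
have /and3P[_ /forall_inP Cw _] := Ccode; have /andP[/forall_inP Sv _] := Santi.
have double_count : \sum_r #|[set c in C | sel_mx r c \in S]| =
                    \sum_(c in C) #|[set r : selection | sel_mx r c \in S]|.
  transitivity (\sum_r \sum_(c in C) (sel_mx r c \in S : nat)).
    apply: eq_bigr => r _; rewrite -sum1dep_card big_mkcondr.
    by apply: eq_bigr => c _; case: (_ \in S).
  rewrite exchange_big; apply: eq_bigr => c _; rewrite -sum1dep_card [RHS]big_mkcond.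
  by apply: eq_bigr => r _; case: (_ \in S).
rewrite -mulnA -sum_nat_const.
rewrite (eq_bigr _ (fun c cC => esym (card_sel_mx_in (Cw c cC) Sv))) -double_count.
apply: (@leq_trans (\sum_(r : selection) Acode (m1 * l) q (l * w - v) (d - delta%:Z))).
  by apply: leq_sum => r _; apply: card_sel_mx_in_code.
by rewrite sum_nat_const card_ffun !card_ord.
Qed.

End BlockSplit.

Lemma alpha_gt0 l q v delta : v <= l -> 0 < alpha l q v delta.
Proof.
move=> vl; pose x0 : 'M[bool]_(l, q) := (\matrix_(t, b) (t < v)%N)%R.
have x0_anti : is_anticode v delta [set x0].
  apply/andP; split; apply/forall_inP => _ /set1P ->.
    apply/forallP => b; rewrite -[v in _ == v](card_ord_lt vl).
    by apply/eqP/eq_card => t; rewrite !inE mxE.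
  by apply/forall_inP => _ /set1P ->; rewrite hdistxx.
by apply: leq_trans (leq_bigmax_cond _ x0_anti); rewrite cards1.
Qed.

Lemma bigmax_mul_leq (I : finType) (P : pred I) (F : I -> nat) k B :
  (forall i, P i -> F i * k <= B) -> (\max_(i | P i) F i) * k <= B.
Proof.
move=> FkB; rewrite (big_morph (muln^~ k) (fun x y => maxnMl x y k) (mul0n k)).
exact/bigmax_leqP.
Qed.

Local Open Scope ring_scope.

Theorem proposition3 (m n w d : nat) :
  (0 < m)%N -> (0 < n)%N -> (0 < d)%N -> (1 <= w)%N -> (w <= m - 1)%N ->
  forall (l v delta : nat),
    (0 < l)%N -> (l %| n)%N -> (v <= l)%N ->
    (delta <= (n %/ l) * minn v (l - v))%N ->
    ((Acode m n w d%:Z)%:R : rat) <=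
      ((alpha l (n %/ l) v delta)%:R)^-1 *
      (((m%:R : rat) ^+ l / ((w%:R : rat) ^+ v * ((m - w)%:R : rat) ^+ (l - v)))
         ^+ (n %/ l)) *
      (Acode ((m - 1) * l) (n %/ l) (l * w - v) (d%:Z - delta%:Z))%:R.
Proof.
move=> m_gt0 _ _ w_gt0 w_lt_m l v delta _ l_dvd_n vl _.
case: m m_gt0 w_lt_m => // m1 _; rewrite !subn1 /= => w_le_m1.
move: (n %/ l)%N (divnK l_dvd_n) => q <-.
set K := (w ^ v * (m1.+1 - w) ^ (l - v))%N.
set A' := Acode (m1 * l) q (l * w - v) (d%:Z - delta%:Z).
have bound : (Acode m1.+1 (q * l) w d * alpha l q v delta * K ^ q <= m1.+1 ^ (q * l) * A')%N.
  rewrite -mulnA; apply: bigmax_mul_leq => C Ccode.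
  rewrite mulnCA; apply: bigmax_mul_leq => S Santi.
  by rewrite mulnCA mulnA; apply: code_anticode_card_bound.
have K_gt0 : (0 < K)%N by rewrite muln_gt0 !expn_gt0 w_gt0 subn_gt0 ltnS w_le_m1.
rewrite -!natrX -natrM expr_div_n -!natrX -mulrA ler_pdivlMl ?ltr0n ?alpha_gt0 //.
rewrite mulrAC ler_pdivlMr ?ltr0n ?expn_gt0 ?K_gt0 // -!natrM ler_nat.
by rewrite -expnM (mulnC l q) (mulnC (alpha _ _ _ _)).
Qed.
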